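(* Let $C\ge 2$ and let $\mathbf{o}_m,\mathbf{o}_n\in\mathbb{R}^C$ be logit vectors with $\mathbf{s}_m=\mathrm{softmax}(\mathbf{o}_m)$, $\mathbf{s}_n=\mathrm{softmax}(\mathbf{o}_n)$. Define the KL loss $$\mathcal{L}_{KL}(\mathbf{o}_m,\mathbf{o}_n)=\sum_{j=1}^C \mathbf{s}_m^j\log\frac{\mathbf{s}_m^j}{\mathbf{s}_n^j}.$$ Fix a point $(\bar{\mathbf{o}}_m,\bar{\mathbf{o}}_n)\in\mathbb{R}^C\times\mathbb{R}^C$, and let $\bar{\mathbf{s}}_m=\mathrm{softmax}(\bar{\mathbf{o}}_m)$, $\bar{\mathbf{w}}^{j,k}=\bar{\mathbf{s}}_m^j\bar{\mathbf{s}}_m^k$, $\overline{\Delta\mathbf{n}}_{j,k}=\bar{\mathbf{o}}_n^j-\bar{\mathbf{o}}_n^k$. For $\alpha,\beta>0$ define the Decoupled KL (DKL) loss (in which the barred quantities are held constant, i.e. are ''stop-gradient'' quantities) $$\mathcal{L}_{DKL}(\mathbf{o}_m,\mathbf{o}_n)=\frac{\alpha}{4}\sum_{j=1}^C\sum_{k=1}^C \bar{\mathbf{w}}^{j,k}\big((\mathbf{o}_m^j-\mathbf{o}_m^k)-\overline{\Delta\mathbf{n}}_{j,k}\big)^2\;-\;\beta\sum_{j=1}^C \bar{\mathbf{s}}_m^j\log \mathrm{softmax}(\mathbf{o}_n)^j .$$ Then, when $\alpha=\beta=1$, at the point $(\mathbf{o}_m,\mathbf{o}_n)=(\bar{\mathbf{o}}_m,\bar{\mathbf{o}}_n)$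 we have $$\nabla_{\mathbf{o}_m}\mathcal{L}_{DKL}=\nabla_{\mathbf{o}_m}\mathcal{L}_{KL},\qquad \nabla_{\mathbf{o}_n}\mathcal{L}_{DKL}=\nabla_{\mathbf{o}_n}\mathcal{L}_{KL}.$$ Since $(\bar{\mathbf{o}}_m,\bar{\mathbf{o}}_n)$ is arbitrary, the KL loss and the DKL loss (with $\alpha=\beta=1$) produce identical gradients at every input.
   Context: $\mathrm{softmax}(\mathbf{o})^j=e^{\mathbf{o}^j}/\sum_{k=1}^C e^{\mathbf{o}^k}$. Superscripts $j,k$ denote coordinates (class indices). The ''stop-gradient'' convention: in $\mathcal{L}_{DKL}$, the weights $\bar{\mathbf{w}}$, the differences $\overline{\Delta\mathbf{n}}$ and the soft labels $\bar{\mathbf{s}}_m$ are evaluated at the point where the gradient is taken and are treated as constants when differentiating. *)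

From HB Require Import structures.
From mathcomp Require Import all_boot all_order all_algebra.
From mathcomp Require Import all_classical all_reals all_analysis.
Set Implicit Arguments. Unset Strict Implicit. Unset Printing Implicit Defensive.
Import Order.TTheory GRing.Theory Num.Theory.
Local Open Scope ring_scope.

Section Defs.
Variables (R : realType) (C : nat).

Definition softmax (o : 'I_C -> R) (j : 'I_C) : R :=
  expR (o j) / \sum_(k < C) expR (o k).

Definition L_KL (om on : 'I_C -> R) : R :=
  \sum_(j < C) softmax om j * ln (softmax om j / softmax on j).

(* L_DKL with stop-gradient quantities computed from the fixed point (obm, obn):
   w^{j,k} = sbm^j sbm^k, dn_{j,k} = obn^j - obn^k, sbm = softmax obm. *)
Definition L_DKL (alpha beta : R) (obm obn : 'I_C -> R) (om on : 'I_C -> R) : R :=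
  alpha / 4 * \sum_(j < C) \sum_(k < C)
      (softmax obm j * softmax obm k) * ((om j - om k) - (obn j - obn k)) ^+ 2
  - beta * \sum_(j < C) softmax obm j * ln (softmax on j).

Definition shift_coord (o : 'I_C -> R) (i : 'I_C) (t : R) : 'I_C -> R :=
  fun j => o j + (if j == i then t else 0).

End Defs.

From HB Require Import structures.
From mathcomp Require Import all_boot all_order all_algebra.
From mathcomp Require Import all_classical all_reals all_analysis.
From mathcomp Require Import ring.
Import Order.TTheory GRing.Theory Num.Theory.
Local Open Scope ring_scope.

(* Moving coordinate i of a logit vector o by t, the softmax s = softmax o
   satisfies  d ln s^j = [j = i] - s^i  and  d s^j = s^j ([j = i] - s^i).

   * Second argument o_n: both losses depend on o_n only through the
     cross-entropy term  - sum_j s_m^j ln softmax(o_n)^j  (L_KL also has the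
     o_n-independent entropy part), whose derivative is  softmax(o_n)^i - s_m^i.
   * First argument o_m: with  b^j = ln s_m^j - ln s_n^j,  the derivative of
     L_KL is the s_m-covariance of b and the coordinate indicator [. = i].
     In L_DKL the difference  (o_m^j - o_m^k) - (o_n^j - o_n^k)  equals
     b^j - b^k (ln softmax is the logit minus a common log-partition term),
     so its derivative is  (1/2) sum_{j,k} s^j s^k (b^j - b^k)(v^j - v^k)
     with v = [. = i]; by the pairwise covariance identity (valid since
     sum_j s^j = 1) this is the same covariance. *)

(* Differentiation rules for real functions written pointwise, i.e. with the
   function given as [fun t => ...] rather than as a sum/product of functions. *)
Section PointwiseDerivatives.
Variable R : realType.
Implicit Types (f g : R -> R) (x a b : R).

Lemma is_derive_cstF (c x : R) : is_derive x 1 (fun _ => c) 0.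
Proof. exact: is_derive_cst. Qed.

Lemma is_derive_sumF n (h : 'I_n -> R -> R) x (d : 'I_n -> R) :
  (forall j, is_derive x 1 (h j) (d j)) ->
  is_derive x 1 (fun t => \sum_(j < n) h j t) (\sum_(j < n) d j).
Proof. by move=> hd; have := is_derive_sum hd; rewrite fct_sumE. Qed.

Lemma is_derive_mulF f g x a b : is_derive x 1 f a -> is_derive x 1 g b ->
  is_derive x 1 (fun t => f t * g t) (f x * b + g x * a).
Proof. by move=> df dg; have := is_deriveM df dg. Qed.

Lemma is_derive_addF f g x a b : is_derive x 1 f a -> is_derive x 1 g b ->
  is_derive x 1 (fun t => f t + g t) (a + b).
Proof. by move=> df dg; have := is_deriveD df dg. Qed.

Lemma is_derive_subF f g x a b : is_derive x 1 f a -> is_derive x 1 g b ->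
  is_derive x 1 (fun t => f t - g t) (a - b).
Proof. by move=> df dg; have := is_deriveB df dg. Qed.

Lemma is_derive_invF f x a : f x != 0 -> is_derive x 1 f a ->
  is_derive x 1 (fun t => (f t)^-1) (- (f x) ^- 2 * a).
Proof. by move=> fx0 df; have := is_deriveV fx0 df. Qed.

Lemma is_derive_sqrF f x a : is_derive x 1 f a ->
  is_derive x 1 (fun t => f t ^+ 2) (2 * f x * a).
Proof. by move=> df; have := is_deriveX 2 df; rewrite expr1. Qed.

Lemma is_derive_expRF f x a : is_derive x 1 f a ->
  is_derive x 1 (fun t => expR (f t)) (expR (f x) * a).
Proof. by move=> df; have := is_derive1_comp (is_derive_expR (f x)) df. Qed.

Lemma is_derive_lnF f x a : 0 < f x -> is_derive x 1 f a ->
  is_derive x 1 (fun t => ln (f t)) ((f x)^-1 * a).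
Proof. by move=> fx_gt0 df; have := is_derive1_comp (is_derive1_ln fx_gt0) df. Qed.

End PointwiseDerivatives.

Arguments is_derive_cstF {R}.
Arguments is_derive_sumF {R n h x d}.
Arguments is_derive_mulF {R f g x a b}.
Arguments is_derive_addF {R f g x a b}.
Arguments is_derive_subF {R f g x a b}.
Arguments is_derive_invF {R f x a}.
Arguments is_derive_sqrF {R f x a}.
Arguments is_derive_expRF {R f x a}.
Arguments is_derive_lnF {R f x a}.

Definition covariance {R : pzRingType} {C : nat} (s b v : 'I_C -> R) : R :=
  \sum_(j < C) s j * b j * v j
  - (\sum_(j < C) s j * b j) * (\sum_(j < C) s j * v j).

(* Pairwise covariance identity: for weights summing to 1,
   sum_{j,k} s^j s^k (b^j - b^k)(v^j - v^k) = 2 Cov_s(b, v).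
   This is what turns the DKL quadratic term into the KL gradient. *)
Lemma pairwise_covariance (R : comPzRingType) (C : nat) (s b v : 'I_C -> R) :
  \sum_(j < C) s j = 1 ->
  \sum_(j < C) \sum_(k < C) s j * s k * ((b j - b k) * (v j - v k)) =
  2 * covariance s b v.
Proof.
move=> sum_s1; rewrite /covariance.
set Sb := \sum_(k < C) s k * b k; set Sv := \sum_(k < C) s k * v k.
set Sbv := \sum_(k < C) s k * b k * v k.
have inner j : \sum_(k < C) s j * s k * ((b j - b k) * (v j - v k)) =
    s j * b j * v j - s j * b j * Sv - s j * v j * Sb + s j * Sbv.
  rewrite (eq_bigr (fun k => s j * b j * v j * s k - s j * b j * (s k * v k)
      - s j * v j * (s k * b k) + s j * (s k * b k * v k))); last by move=> k _; ring.
  by rewrite !big_split /= !sumrN -!mulr_sumr sum_s1 mulr1.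
rewrite (eq_bigr _ (fun j _ => inner j)) !big_split /= !sumrN -!mulr_suml.
by rewrite -/Sbv -/Sb -/Sv sum_s1 mul1r; ring.
Qed.

(* Softmax calculus along the coordinate direction i.  Derivatives are taken
   at t = 0 of t |-> shift_coord o i t; since o is arbitrary this is no loss. *)
Section SoftmaxCalculus.
Context {R : realType} {C : nat} (i : 'I_C).
Implicit Types (o p : 'I_C -> R).

Lemma sum_mul_indicator (F : 'I_C -> R) : \sum_(k < C) F k * (k == i)%:R = F i.
Proof.
rewrite (bigD1 i) //= eqxx mulr1 big1 ?addr0 // => k /negPf ->.
by rewrite mulr0.
Qed.

(* The softmax normaliser is positive (the index set contains i). *)
Lemma sum_expR_gt0 p : 0 < \sum_(k < C) expR (p k).
Proof.
rewrite (bigD1 i) //=; apply: (lt_le_trans (expR_gt0 (p i))).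
by rewrite lerDl; apply: sumr_ge0 => k _; apply/ltW/expR_gt0.
Qed.

Lemma softmax_gt0 p j : 0 < softmax p j.
Proof. by rewrite /softmax divr_gt0 ?expR_gt0 ?sum_expR_gt0. Qed.

Lemma sum_softmax p : \sum_(j < C) softmax p j = 1.
Proof. by rewrite /softmax -mulr_suml mulfV // gt_eqF // sum_expR_gt0. Qed.

Lemma ln_softmax p j : ln (softmax p j) = p j - ln (\sum_(k < C) expR (p k)).
Proof. by rewrite /softmax ln_div ?expRK // posrE ?expR_gt0 ?sum_expR_gt0. Qed.

Lemma ln_softmax_ratio p q j :
  ln (softmax p j / softmax q j) = ln (softmax p j) - ln (softmax q j).
Proof. by rewrite ln_div // posrE softmax_gt0. Qed.

Lemma shift_coord0 o : shift_coord o i 0 = o.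
Proof. by apply/funext => j; rewrite /shift_coord; case: ifP; rewrite addr0. Qed.

Lemma is_derive_shift_coord o j :
  is_derive (0 : R) 1 (fun t => shift_coord o i t j) (j == i)%:R.
Proof.
rewrite /shift_coord; case: (j == i).
  by apply: is_derive_eq (is_derive_addF (is_derive_cstF (o j) 0)
                                         (is_derive_id (0 : R) 1)) _; rewrite add0r.
by apply: is_derive_eq (is_derive_addF (is_derive_cstF (o j) 0)
                                       (is_derive_cstF (0 : R) 0)) _; rewrite addr0.
Qed.

Lemma is_derive_softmax o j :
  is_derive (0 : R) 1 (fun t => softmax (shift_coord o i t) j)
    (softmax o j * ((j == i)%:R - softmax o i)).
Proof.
have dZ : is_derive (0 : R) 1 (fun t => \sum_(k < C) expR (shift_coord o i t k))
    (expR (o i)).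
  apply: is_derive_eq; first by apply: is_derive_sumF => k;
    exact/is_derive_expRF/is_derive_shift_coord.
  by rewrite /= shift_coord0 sum_mul_indicator.
apply: is_derive_eq.
  apply: is_derive_mulF; first exact/is_derive_expRF/is_derive_shift_coord.
  by apply: is_derive_invF dZ; rewrite gt_eqF // sum_expR_gt0.
rewrite /softmax shift_coord0.
have : \sum_(k < C) expR (o k) != 0 by rewrite gt_eqF // sum_expR_gt0.
by set Z := \sum_(k < C) _ => Z_neq0; field.
Qed.

Lemma is_derive_ln_softmax o j :
  is_derive (0 : R) 1 (fun t => ln (softmax (shift_coord o i t) j))
    ((j == i)%:R - softmax o i).
Proof.
apply: is_derive_eq.
  by apply: is_derive_lnF; [exact: softmax_gt0 | exact: is_derive_softmax].
by rewrite /= shift_coord0 mulKf // gt_eqF // softmax_gt0.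
Qed.

Lemma is_derive_cross_entropy p o : \sum_(j < C) p j = 1 ->
  is_derive (0 : R) 1
    (fun t => \sum_(j < C) p j * ln (softmax (shift_coord o i t) j))
    (p i - softmax o i).
Proof.
move=> sum_p1; apply: is_derive_eq.
  apply: is_derive_sumF => j.
  exact: is_derive_mulF (is_derive_cstF (p j) 0) (is_derive_ln_softmax o j).
rewrite (eq_bigr (fun j => p j * (j == i)%:R - softmax o i * p j)); last first.
  by move=> j _; rewrite mulr0 addr0; ring.
by rewrite sumrB sum_mul_indicator -mulr_sumr sum_p1 mulr1.
Qed.

Lemma is_derive_weighted_sq_gap o j k (w c : R) :
  is_derive (0 : R) 1
    (fun t => w * ((shift_coord o i t j - shift_coord o i t k) - c) ^+ 2)
    (w * (2 * ((o j - o k) - c) * ((j == i)%:R - (k == i)%:R))).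
Proof.
apply: is_derive_eq.
  apply: is_derive_mulF (is_derive_cstF _ _) _; apply: is_derive_sqrF.
  apply: is_derive_subF _ (is_derive_cstF _ _).
  exact: is_derive_subF (is_derive_shift_coord _ _) (is_derive_shift_coord _ _).
by rewrite /= shift_coord0 mulr0 addr0 subr0.
Qed.

End SoftmaxCalculus.

Section PartialDerivatives.
Variables (R : realType) (C : nat) (i : 'I_C) (om on : 'I_C -> R).

Definition log_ratio (j : 'I_C) : R := ln (softmax om j) - ln (softmax on j).

(* d/d o_m^i of L_KL is Cov_{s_m}(b, [. = i]); the term coming from the
   derivative of the logarithm vanishes because sum_j d s_m^j = 0. *)
Lemma is_derive_KL_first :
  is_derive (0 : R) 1 (fun t => L_KL (shift_coord om i t) on)
    (covariance (softmax om) log_ratio (fun j => (j == i)%:R)).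
Proof.
have -> : (fun t => L_KL (shift_coord om i t) on) = (fun t => \sum_(j < C)
    softmax (shift_coord om i t) j *
    (ln (softmax (shift_coord om i t) j) - ln (softmax on j))).
  by apply/funext => t; apply: eq_bigr => j _; rewrite (ln_softmax_ratio i).
apply: is_derive_eq.
  apply: is_derive_sumF => j; apply: is_derive_mulF (is_derive_softmax i om j) _.
  exact: is_derive_subF (is_derive_ln_softmax i om j) (is_derive_cstF _ _).
rewrite /covariance shift_coord0.
set s := softmax om; set b := log_ratio.
rewrite (eq_bigr (fun j => s j * b j * (j == i)%:R - s i * (s j * b j)
    + (s j * (j == i)%:R - s i * s j))); last first.
  by move=> j _; rewrite /= subr0 /b /log_ratio; ring.
rewrite big_split !sumrB /=.
rewrite (sum_mul_indicator i s) -!mulr_sumr.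
by rewrite (sum_softmax i) mulr1 subrr addr0 (mulrC _ (s i)).
Qed.

(* d/d o_m^i of L_DKL: the quadratic term gives the same covariance, while
   the cross-entropy term does not depend on o_m. *)
Lemma is_derive_DKL_first :
  is_derive (0 : R) 1 (fun t => L_DKL 1 1 om on (shift_coord om i t) on)
    (covariance (softmax om) log_ratio (fun j => (j == i)%:R)).
Proof.
have dquad := is_derive_sumF (fun j => is_derive_sumF (fun k =>
  is_derive_weighted_sq_gap i om j k (softmax om j * softmax om k) (on j - on k))).
have dDKL := is_derive_subF (is_derive_mulF (is_derive_cstF (1 / 4) 0) dquad)
  (is_derive_cstF (1 * \sum_(j < C) softmax om j * ln (softmax on j)) 0).
rewrite /L_DKL; apply: is_derive_eq dDKL _.
have logit_gap j k : (om j - om k) - (on j - on k) = log_ratio j - log_ratio k.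
  by rewrite /log_ratio !(ln_softmax i); ring.
rewrite mulr0 addr0 subr0.
rewrite (eq_bigr (fun j => 2 * \sum_(k < C) softmax om j * softmax om k *
    ((log_ratio j - log_ratio k) * ((j == i)%:R - (k == i)%:R)))); last first.
  by move=> j _; rewrite mulr_sumr; apply: eq_bigr => k _; rewrite logit_gap; ring.
rewrite -mulr_sumr pairwise_covariance ?(sum_softmax i) //.
by field.
Qed.

Lemma is_derive_KL_second :
  is_derive (0 : R) 1 (fun t => L_KL om (shift_coord on i t))
    (softmax on i - softmax om i).
Proof.
have -> : (fun t => L_KL om (shift_coord on i t)) =
    (fun t => \sum_(j < C) softmax om j * ln (softmax om j)
       - \sum_(j < C) softmax om j * ln (softmax (shift_coord on i t) j)).
  apply/funext => t; rewrite -sumrB; apply: eq_bigr => j _.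
  by rewrite (ln_softmax_ratio i); ring.
have dKL := is_derive_subF
  (is_derive_cstF (\sum_(j < C) softmax om j * ln (softmax om j)) 0)
  (is_derive_cross_entropy i (softmax om) on (sum_softmax i om)).
by apply: is_derive_eq dKL _; rewrite sub0r opprB.
Qed.

Lemma is_derive_DKL_second :
  is_derive (0 : R) 1 (fun t => L_DKL 1 1 om on om (shift_coord on i t))
    (softmax on i - softmax om i).
Proof.
have dDKL := is_derive_subF (is_derive_cstF (1 / 4 * \sum_(j < C) \sum_(k < C)
    (softmax om j * softmax om k) * ((om j - om k) - (on j - on k)) ^+ 2) 0)
  (is_derive_mulF (is_derive_cstF 1 0)
     (is_derive_cross_entropy i (softmax om) on (sum_softmax i om))).
rewrite /L_DKL; apply: is_derive_eq dDKL _.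
by rewrite mulr0 addr0 mul1r sub0r opprB.
Qed.

End PartialDerivatives.

Theorem theorem1 (R : realType) (C : nat) (hC : (2 <= C)%N)
    (obm obn : 'I_C -> R) (i : 'I_C) :
  (exists d : R,
     is_derive (0 : R) (1 : R) (fun t : R => L_KL (shift_coord obm i t) obn) d /\
     is_derive (0 : R) (1 : R)
       (fun t : R => L_DKL 1 1 obm obn (shift_coord obm i t) obn) d) /\
  (exists d : R,
     is_derive (0 : R) (1 : R) (fun t : R => L_KL obm (shift_coord obn i t)) d /\
     is_derive (0 : R) (1 : R)
       (fun t : R => L_DKL 1 1 obm obn obm (shift_coord obn i t)) d).
Proof.
split; eexists; split.
- exact: is_derive_KL_first.
- exact: is_derive_DKL_first.
- exact: is_derive_KL_second.
- exact: is_derive_DKL_second.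
Qed.
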